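(* For all $n\in\mathbb{N}\cup\{0\}$ and $x\in\mathbb{R}$, the physicist's Hermite polynomials satisfy $$|H_n(x)|\le\begin{cases}n^{n/2}(4\sqrt2)^n\left(1+\frac n2\right),&\text{if }|x|\le\sqrt{2n},\\ 2^{2n}|x|^n\left(1+\frac n2\right),&\text{if }|x|>\sqrt{2n},\end{cases}$$ where $0^0:=1$. In particular, $$|H_n(x)|\le4^n\left(1+\frac n2\right)\left(2^{n/2}n^{n/2}+|x|^n\right).$$
   Context: $H_n$ denotes the $n$-th physicist's Hermite polynomial, $H_n(x)=\sum_{m=0}^{\lfloor n/2\rfloor}\frac{(-1)^m n!}{m!(n-2m)!}(2x)^{n-2m}$. *)

From Stdlib Require Import Reals Lra Lia Arith Factorial.
Open Scope R_scope.

Definition hermite (n : nat) (x : R) : R :=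
  sum_f_R0 (fun m => (-1) ^ m * INR (fact n) / (INR (fact m) * INR (fact (n - 2 * m)))
                     * (2 * x) ^ (n - 2 * m)) (Nat.div2 n).

(* Since n!/(m!(n-2m)!) = C(n,2m) (2m)!/m! with C(n,2m) <= 2^n and (2m)!/m! <= n^m, the m-th
   term of H_n(x) is at most 2^n n^m |2x|^(n-2m) <= 4^n M^n for every M >= max(sqrt n, |x|),
   and H_n has floor(n/2)+1 <= 1+n/2 terms.  Take M = sqrt(2n) when |x| <= sqrt(2n) and
   M = |x| otherwise; M^n <= sqrt(2n)^n + |x|^n gives the combined bound. *)

From Stdlib Require Import Reals Lra Lia Factorial.
Open Scope R_scope.

Lemma INR_fact_pos k : 0 < INR (fact k).
Proof. apply lt_0_INR, lt_O_fact. Qed.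

Lemma C_ge0 n k : 0 <= C n k.
Proof.
  unfold C; pose proof (INR_fact_pos n); pose proof (INR_fact_pos k);
    pose proof (INR_fact_pos (n - k)).
  apply Rmult_le_pos; [lra|].
  apply Rlt_le, Rinv_0_lt_compat, Rmult_lt_0_compat; lra.
Qed.

Lemma C_le_pow2 n k : (k <= n)%nat -> C n k <= 2 ^ n.
Proof.
  revert k; induction n as [|n IH]; intros k Hk.
  - replace k with 0%nat by lia; unfold C; simpl; lra.
  - assert (H1 : 1 <= 2 ^ S n) by (apply pow_R1_Rle; lra).
    pose proof (INR_fact_pos (S n)).
    destruct k as [|k].
    + unfold C; rewrite Nat.sub_0_r; simpl (INR (fact 0)).
      replace (_ / _) with 1 by (field; lra); exact H1.
    + destruct (Nat.eq_dec k n) as [->|Hkn].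
      * unfold C; rewrite Nat.sub_diag; simpl (INR (fact 0)).
        replace (_ / _) with 1 by (field; lra); exact H1.
      * rewrite <- pascal by lia.
        pose proof (IH k ltac:(lia)); pose proof (IH (S k) ltac:(lia)).
        simpl; lra.
Qed.

Lemma fact_add_le m k : (fact (m + k) <= fact m * (m + k) ^ k)%nat.
Proof.
  induction k as [|k IH]; [rewrite Nat.add_0_r; simpl; lia|].
  rewrite Nat.add_succ_r; simpl (fact (S _)); rewrite Nat.pow_succ_r'.
  assert (fact m * (m + k) ^ k <= fact m * S (m + k) ^ k)%nat
    by (apply Nat.mul_le_mono_l, Nat.pow_le_mono_l; lia).
  nia.
Qed.

Lemma fact_double_le m n : (2 * m <= n)%nat -> (fact (2 * m) <= fact m * n ^ m)%nat.
Proof.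
  intros Hm; replace (2 * m)%nat with (m + m)%nat by lia.
  eapply Nat.le_trans; [apply fact_add_le|].
  apply Nat.mul_le_mono_l, Nat.pow_le_mono_l; lia.
Qed.

Lemma hermite_coef_le n m : (2 * m <= n)%nat ->
  INR (fact n) / (INR (fact m) * INR (fact (n - 2 * m))) <= 2 ^ n * INR n ^ m.
Proof.
  intros Hm.
  pose proof (INR_fact_pos m); pose proof (INR_fact_pos (2 * m));
    pose proof (INR_fact_pos (n - 2 * m)).
  replace (_ / _) with (C n (2 * m) * (INR (fact (2 * m)) / INR (fact m)))
    by (unfold C; field; lra).
  apply Rmult_le_compat.
  - apply C_ge0.
  - apply Rlt_le, Rdiv_lt_0_compat; lra.
  - apply C_le_pow2; lia.
  - apply (Rmult_le_reg_r (INR (fact m))); [lra|].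
    replace (_ / _ * _) with (INR (fact (2 * m))) by (field; lra).
    rewrite <- pow_INR, Rmult_comm, <- mult_INR.
    apply le_INR, fact_double_le, Hm.
Qed.

Lemma hermite_term_le n m x M : (2 * m <= n)%nat ->
  sqrt (INR n) <= M -> Rabs x <= M ->
  Rabs ((-1) ^ m * INR (fact n) / (INR (fact m) * INR (fact (n - 2 * m)))
        * (2 * x) ^ (n - 2 * m)) <= 4 ^ n * M ^ n.
Proof.
  intros Hm Hn Hx.
  set (c := INR (fact n) / (INR (fact m) * INR (fact (n - 2 * m)))).
  assert (Hc0 : 0 <= c).
  { pose proof (INR_fact_pos n); pose proof (INR_fact_pos m);
      pose proof (INR_fact_pos (n - 2 * m)).
    apply Rlt_le, Rdiv_lt_0_compat; [|apply Rmult_lt_0_compat]; lra. }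
  assert (HM : 0 <= M) by (pose proof (sqrt_pos (INR n)); lra).
  assert (Hc : c <= 2 ^ n * M ^ (2 * m)).
  { eapply Rle_trans; [apply hermite_coef_le, Hm|].
    apply Rmult_le_compat_l; [apply pow_le; lra|].
    rewrite <- (pow2_sqrt (INR n)) by apply pos_INR.
    rewrite <- pow_mult; apply pow_incr; split; [apply sqrt_pos | exact Hn]. }
  assert (Hpow : Rabs ((2 * x) ^ (n - 2 * m)) <= 2 ^ n * M ^ (n - 2 * m)).
  { rewrite <- RPow_abs, Rabs_mult, Rabs_pos_eq, Rpow_mult_distr by lra.
    apply Rmult_le_compat; try (apply pow_le; try apply Rabs_pos; lra).
    - apply Rle_pow; [lra | lia].
    - apply pow_incr; split; [apply Rabs_pos | exact Hx]. }
  replace ((-1) ^ m * INR (fact n) / _ * _) with ((-1) ^ m * (c * (2 * x) ^ (n - 2 * m)))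
    by (unfold c, Rdiv; ring).
  rewrite Rabs_mult, pow_1_abs, Rmult_1_l, Rabs_mult, (Rabs_pos_eq c) by exact Hc0.
  replace (4 ^ n * M ^ n) with ((2 ^ n * M ^ (2 * m)) * (2 ^ n * M ^ (n - 2 * m))).
  - apply Rmult_le_compat; [exact Hc0 | apply Rabs_pos | exact Hc | exact Hpow].
  - replace (4 ^ n) with (2 ^ n * 2 ^ n) by (rewrite <- Rpow_mult_distr; f_equal; lra).
    replace (M ^ n) with (M ^ (2 * m) * M ^ (n - 2 * m))
      by (rewrite <- pow_add; f_equal; lia).
    ring.
Qed.

Lemma INR_S_div2_le n : INR (S (Nat.div2 n)) <= 1 + INR n / 2.
Proof.
  pose proof (Nat.div2_odd n) as En.
  assert (H2 : (2 * Nat.div2 n <= n)%nat) by lia.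
  apply le_INR in H2; rewrite mult_INR in H2; rewrite S_INR; simpl (INR 2) in H2; lra.
Qed.

Lemma hermite_le n x M : sqrt (INR n) <= M -> Rabs x <= M ->
  Rabs (hermite n x) <= 4 ^ n * M ^ n * (1 + INR n / 2).
Proof.
  intros Hn Hx; unfold hermite.
  eapply Rle_trans; [apply sum_f_R0_triangle|].
  eapply Rle_trans.
  { apply (sum_Rle _ (fun _ => 4 ^ n * M ^ n)); intros m Hm.
    apply hermite_term_le; [pose proof (Nat.div2_odd n); lia | exact Hn | exact Hx]. }
  rewrite sum_cte; apply Rmult_le_compat_l; [|apply INR_S_div2_le].
  pose proof (sqrt_pos (INR n)).
  apply Rmult_le_pos; apply pow_le; lra.
Qed.

(* n^(n/2) is encoded as sqrt n ^ n, which equals 1 at n = 0 as the convention 0^0 := 1 requires. *)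
Theorem lemma4p3 (n : nat) (x : R) :
  (Rabs x <= sqrt (2 * INR n) ->
     Rabs (hermite n x) <= sqrt (INR n) ^ n * (4 * sqrt 2) ^ n * (1 + INR n / 2)) /\
  (Rabs x > sqrt (2 * INR n) ->
     Rabs (hermite n x) <= 2 ^ (2 * n) * Rabs x ^ n * (1 + INR n / 2)) /\
  Rabs (hermite n x) <=
     4 ^ n * (1 + INR n / 2) * (sqrt 2 ^ n * sqrt (INR n) ^ n + Rabs x ^ n).
Proof.
  pose proof (pos_INR n) as Hn0.
  set (r := sqrt (2 * INR n)).
  assert (Hr : sqrt (INR n) <= r) by (apply sqrt_le_1_alt; lra).
  assert (Er : r ^ n = sqrt 2 ^ n * sqrt (INR n) ^ n)
    by (unfold r; rewrite sqrt_mult, Rpow_mult_distr by lra; reflexivity).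
  assert (Hsmall : Rabs x <= r -> Rabs (hermite n x) <= 4 ^ n * r ^ n * (1 + INR n / 2))
    by (intro; apply hermite_le; assumption).
  assert (Hlarge : Rabs x > r -> Rabs (hermite n x) <= 4 ^ n * Rabs x ^ n * (1 + INR n / 2))
    by (intro; apply hermite_le; lra).
  split; [|split].
  - replace (sqrt (INR n) ^ n * (4 * sqrt 2) ^ n) with (4 ^ n * r ^ n)
      by (rewrite Er, Rpow_mult_distr; ring).
    exact Hsmall.
  - replace (2 ^ (2 * n)) with (4 ^ n) by (rewrite pow_mult; f_equal; lra); exact Hlarge.
  - rewrite <- Er.
    assert (0 <= 4 ^ n * (1 + INR n / 2)) by (apply Rmult_le_pos; [apply pow_le|]; lra).
    assert (0 <= r ^ n) by (apply pow_le, sqrt_pos).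
    assert (0 <= Rabs x ^ n) by (apply pow_le, Rabs_pos).
    destruct (Rle_or_lt (Rabs x) r) as [Hx|Hx]; [apply Hsmall in Hx|apply Hlarge in Hx]; nra.
Qed.
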